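(* Let $q\ge 2$ and $n\ge 1$. If a quasi-complementary Lee metric Gray code of $q$-ary $n$-tuples exists, then $n$ is even, or $q$ is odd, or $n=1$.
   Context: The Lee distance between $v,u\in\mathbb{Z}_q^n$ is $\sum_{i=1}^n \min\{|v_i-u_i|,\,q-|v_i-u_i|\}$ (entries regarded as integers in $\{0,\ldots,q-1\}$). A quasi-complementary Lee metric Gray code of $q$-ary $n$-tuples is an ordering $G(0),\ldots,G(q^n-1)$ of all $q^n$ words of $\mathbb{Z}_q^n$ such that consecutive words $G(i),G(i+1)$ ($0\le i<q^n-1$) have Lee distance $1$, and $G((i+q^{n-1})\bmod q^n)=G(i)+(1,1,\ldots,1)$ for all $i$, with addition of words in $\mathbb{Z}_q^n$. *)

From mathcomp Require Import all_boot all_order.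
Set Implicit Arguments. Unset Strict Implicit. Unset Printing Implicit Defensive.

Definition word (q n : nat) := {ffun 'I_n -> 'I_q}.

Definition lee_coord (q a b : nat) : nat :=
  let d := if a <= b then b - a else a - b in minn d (q - d).

Definition lee_dist (q n : nat) (v u : word q n) : nat :=
  \sum_(i < n) lee_coord q (v i) (u i).

Definition add_ones (q n : nat) (v : word q n) : word q n :=
  [ffun i => Ordinal (ltn_pmod (v i).+1 (leq_ltn_trans (leq0n _) (ltn_ord (v i))))].

(* A quasi-complementary Lee metric Gray code: an ordering G(0..q^n-1) of all
   words (a bijection 'I_(q^n) -> word q n) such that consecutive words are at
   Lee distance 1 and G((i + q^(n-1)) mod q^n) = G(i) + (1,...,1). *)
Definition qc_lee_gray_code (q n : nat) (G : 'I_(q ^ n) -> word q n) : Prop :=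
  bijective G /\
  (forall i j : 'I_(q ^ n), j = i.+1 :> nat -> lee_dist (G i) (G j) = 1) /\
  (forall i j : 'I_(q ^ n), j = (i + q ^ n.-1) %% q ^ n :> nat ->
      G j = add_ones (G i)).

From mathcomp Require Import all_boot all_order.

Set Implicit Arguments.
Unset Strict Implicit.

(* For even q, the Lee distance of two words has the parity of the sum of all
   their entries, so the parity of the entry sum alternates along a Gray code
   and G(q^(n-1)) has the same parity as G(0) once n >= 2.  Adding the all-ones
   word flips the parity of every entry (q - 1 wraps around to the even 0), so
   it changes the parity of the entry sum when n is odd. *)

Definition word_parity {q n : nat} (v : word q n) : bool := odd (\sum_i (v i : nat)).

Lemma odd_sum (I : finType) (F : I -> nat) :
  odd (\sum_i F i) = \big[addb/false]_i odd (F i).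
Proof. exact: (big_morph odd oddD). Qed.

Section EvenModulus.

Variables (q n : nat).
Hypothesis q_even : ~~ odd q.

Lemma odd_lee_coord (a b : nat) : a <= q -> b <= q ->
  odd (lee_coord q a b) = odd (a + b).
Proof.
move=> le_aq le_bq; rewrite /lee_coord.
set d := if a <= b then b - a else a - b.
have le_dq : d <= q by rewrite /d; case: ifP => _; rewrite (leq_trans (leq_subr _ _)).
have odd_d : odd d = odd (a + b).
  rewrite /d oddD; case: leqP => [le_ab|/ltnW le_ba]; rewrite oddB //.
  exact: addbC.
by rewrite /minn; case: ifP => _; rewrite ?oddB // (negbTE q_even) odd_d.
Qed.

Lemma odd_lee_dist (v u : word q n) :
  odd (lee_dist v u) = word_parity v (+) word_parity u.
Proof.
rewrite /lee_dist /word_parity !odd_sum -big_split /=.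
apply: eq_bigr => i _; rewrite odd_lee_coord ?oddD //; exact: ltnW.
Qed.

Lemma odd_add_ones (v : word q n) (i : 'I_n) : odd (add_ones v i) = ~~ odd (v i).
Proof.
rewrite ffunE /=; case: (ltnP (v i).+1 q) => [lt_vq|le_qv].
  by rewrite modn_small.
have vq : (v i).+1 = q by apply/eqP; rewrite eqn_leq le_qv ltn_ord.
by rewrite vq modnn -[~~ _]/(odd (v i).+1) vq (negbTE q_even).
Qed.

Lemma word_parity_add_ones (v : word q n) :
  word_parity (add_ones v) = odd n (+) word_parity v.
Proof.
have -> : odd n = odd (\sum_(i < n) 1) by rewrite sum1_card card_ord.
rewrite /word_parity !odd_sum -big_split /=.
by apply: eq_bigr => i _; rewrite odd_add_ones.
Qed.

Variables (N : nat) (G : 'I_N -> word q n).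
Hypothesis G_step : forall i j : 'I_N, j = i.+1 :> nat -> lee_dist (G i) (G j) = 1.

Lemma gray_word_parity (i0 i : 'I_N) : i0 = 0 :> nat ->
  word_parity (G i) = odd i (+) word_parity (G i0).
Proof.
move=> i0E; case: i => i; elim: i => [|i IH] lt_iN.
  by congr (word_parity (G _)); apply: val_inj; rewrite /= i0E.
have lt_iN' : i < N := ltnW lt_iN.
have := congr1 odd (@G_step (Ordinal lt_iN') (Ordinal lt_iN) erefl).
by rewrite odd_lee_dist IH /= addNb => /addbP.
Qed.

End EvenModulus.

Theorem proposition1 (q n : nat) (hq : 2 <= q) (hn : 1 <= n) :
  (exists G : 'I_(q ^ n) -> word q n, qc_lee_gray_code G) ->
  ~~ odd n \/ odd q \/ n = 1.
Proof.
move=> [G [_ [G_step G_shift]]].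
have [odd_q|even_q] := boolP (odd q); first by right; left.
have [odd_n|] := boolP (odd n); last by left.
have [->|n_neq1] := eqVneq n 1; first by right; right.
have n1_neq0 : n.-1 != 0 by case: n hn n_neq1 {G G_step G_shift odd_n} => [|[]].
have lt0 : 0 < q ^ n by rewrite expn_gt0 (leq_trans _ hq).
have lt_shift : q ^ n.-1 < q ^ n by rewrite ltn_exp2l // prednK // leq_pred.
pose i0 := Ordinal lt0; pose j := Ordinal lt_shift.
have Gj : G j = add_ones (G i0) by apply: G_shift; rewrite /= add0n modn_small.
have := gray_word_parity even_q G_step (i0 := i0) j erefl.
rewrite Gj word_parity_add_ones // odd_n /= oddX (negbTE n1_neq0) (negbTE even_q).
by case: (word_parity _).
Qed.
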